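(* Let $k\ge 2$, let $\mathbf V_1,\ldots,\mathbf V_k$ and $\mathbf Q$ be $p\times p$ positive definite matrices, $\mathbf A=(\sum_{i=1}^k\mathbf V_i^{-1})^{-1}$, and $d_1,\ldots,d_k$ real constants. For $\mathbf x_1,\ldots,\mathbf x_k\in\mathbb R^p$, not all equal, let $\hat{\boldsymbol\nu}=\mathbf A\sum_{i=1}^k\mathbf V_i^{-1}\mathbf x_i$ and $$B(\mathbf x_1,\ldots,\mathbf x_k)=\frac{\{\sum_{i=1}^k d_i(\mathbf x_i-\hat{\boldsymbol\nu})\}^\top\mathbf Q\{\sum_{i=1}^k d_i(\mathbf x_i-\hat{\boldsymbol\nu})\}}{\sum_{j=1}^k(\mathbf x_j-\hat{\boldsymbol\nu})^\top\mathbf V_j^{-1}(\mathbf x_j-\hat{\boldsymbol\nu})}.$$ Then $$B(\mathbf x_1,\ldots,\mathbf x_k)\le \mathrm{Ch}_{\max}\Big(\Big(\sum_{i=1}^k d_i^2\mathbf V_i-\Big(\sum_{i=1}^k d_i\Big)^2\mathbf A\Big)\mathbf Q\Big).$$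
   Context: $\mathrm{Ch}_{\max}(\mathbf C)$ denotes the maximum characteristic value (eigenvalue) of the matrix $\mathbf C$. *)

From HB Require Import structures.
From mathcomp Require Import all_boot all_order all_algebra.
From mathcomp Require Import reals.
Set Implicit Arguments. Unset Strict Implicit. Unset Printing Implicit Defensive.
Import Order.TTheory GRing.Theory Num.Theory.
Local Open Scope ring_scope.

Definition posdef {R : realType} {p : nat} (M : 'M[R]_p) : Prop :=
  M^T = M /\ forall x : 'cV[R]_p, x != 0 -> 0 < (x^T *m M *m x) 0 0.

Definition qform {R : realType} {p : nat} (x : 'cV[R]_p) (M : 'M[R]_p)
  (y : 'cV[R]_p) : R := (x^T *m M *m y) 0 0.

Definition is_chmax {R : realType} {p : nat} (C : 'M[R]_p) (l : R) : Prop :=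
  eigenvalue C l /\ forall m, eigenvalue C m -> m <= l.

Definition Amat {R : realType} {p k : nat} (V : 'I_k -> 'M[R]_p) : 'M[R]_p :=
  invmx (\sum_(i < k) invmx (V i)).

Definition nuhat {R : realType} {p k : nat} (V : 'I_k -> 'M[R]_p)
  (x : 'I_k -> 'cV[R]_p) : 'cV[R]_p :=
  Amat V *m (\sum_(i < k) invmx (V i) *m x i).

Definition Bratio {R : realType} {p k : nat} (V : 'I_k -> 'M[R]_p)
  (Q : 'M[R]_p) (d : 'I_k -> R) (x : 'I_k -> 'cV[R]_p) : R :=
  let nu := nuhat V x in
  let w := \sum_(i < k) d i *: (x i - nu) in
  qform w Q w / \sum_(j < k) qform (x j - nu) (invmx (V j)) (x j - nu).

(* Write W_i = V_i^-1 and y_i = x_i - nuhat, so that sum_i W_i y_i = 0, and let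
   C = sum_i d_i^2 V_i - (sum_i d_i)^2 A.  For every u the vectors
   e_i = d_i V_i u - (sum_j d_j) A u satisfy sum_i e_i^T W_i e_i = u^T C u and,
   because sum_i W_i y_i = 0, sum_i e_i^T W_i y_i = u^T w with w = sum_i d_i y_i.
   So C is positive semidefinite, and Cauchy-Schwarz for the form
   sum_i a_i^T W_i b_i at u = Q w gives
   (w^T Q w)^2 <= (w^T Q C Q w) * sum_i y_i^T W_i y_i,
   i.e. B is at most the maximum l of the quotient w^T Q C Q w / w^T Q w.
   A maximiser w0 exists by compactness of the unit sphere; l Q - Q C Q is then
   positive semidefinite and vanishes on w0, so (Q w0)^T is a left eigenvector
   of C Q for l, while any eigenvector v of C Q gives the quotient value m at
   Q^-1 v^T, whence m <= l. *)
From HB Require Import structures.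
From mathcomp Require Import all_boot all_order all_algebra.
From mathcomp Require Import reals boolp classical_sets topology normedtype derive.
From mathcomp Require Import ring lra.
Import Order.TTheory GRing.Theory Num.Theory.
Set Implicit Arguments. Unset Strict Implicit. Unset Printing Implicit Defensive.
Local Open Scope ring_scope.

Lemma quad_ge0_sqr_le (R : realFieldType) (a b c : R) : 0 <= c ->
  (forall t, 0 <= a + 2 * t * b + t ^+ 2 * c) -> b ^+ 2 <= a * c.
Proof.
move=> c_ge0 quad_ge0.
have [c0|c_gt0] := eqVneq c 0.
  have [b0|bn0] := eqVneq b 0; first by rewrite b0 c0 expr0n mulr0.
  have := quad_ge0 (- (a + 1) / (2 * b)); rewrite c0 mulr0 addr0.
  have -> : a + 2 * (- (a + 1) / (2 * b)) * b = -1 by field.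
  by rewrite ler0N1.
have {}c_gt0 : 0 < c by rewrite lt_def c_gt0.
have := quad_ge0 (- b / c).
have -> : a + 2 * (- b / c) * b + (- b / c) ^+ 2 * c = a - b ^+ 2 / c.
  by field; rewrite gt_eqF.
by rewrite subr_ge0 ler_pdivrMr.
Qed.

Section QuadraticForm.
Variables (R : realType) (p : nat).
Implicit Types (y z : 'cV[R]_p) (M N S : 'M[R]_p).

Lemma qform0r y M : qform y M 0 = 0.
Proof. by rewrite /qform mulmx0 mxE. Qed.

Lemma qformDl y z M w : qform (y + z) M w = qform y M w + qform z M w.
Proof. by rewrite /qform raddfD /= !mulmxDl mxE. Qed.

Lemma qformZl t y M w : qform (t *: y) M w = t * qform y M w.
Proof. by rewrite /qform linearZ /= -!scalemxAl mxE. Qed.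

Lemma qformBl y z M w : qform (y - z) M w = qform y M w - qform z M w.
Proof. by rewrite qformDl -scaleN1r qformZl mulN1r. Qed.

Lemma qformDr y z M w : qform w M (y + z) = qform w M y + qform w M z.
Proof. by rewrite /qform !mulmxDr mxE. Qed.

Lemma qformZr t y M w : qform w M (t *: y) = t * qform w M y.
Proof. by rewrite /qform -!scalemxAr mxE. Qed.

Lemma qformBr y z M w : qform w M (y - z) = qform w M y - qform w M z.
Proof. by rewrite qformDr -scaleN1r qformZr mulN1r. Qed.

Lemma qformDm y M N z : qform y (M + N) z = qform y M z + qform y N z.
Proof. by rewrite /qform mulmxDr mulmxDl mxE. Qed.

Lemma qformZm y t M z : qform y (t *: M) z = t * qform y M z.
Proof. by rewrite /qform -scalemxAr -scalemxAl mxE. Qed.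

Lemma qformBm y M N z : qform y (M - N) z = qform y M z - qform y N z.
Proof. by rewrite qformDm -scaleN1r qformZm mulN1r. Qed.

Lemma qform_summ k y (F : 'I_k -> 'M[R]_p) z :
  qform y (\sum_(i < k) F i) z = \sum_(i < k) qform y (F i) z.
Proof. by rewrite /qform mulmx_sumr mulmx_suml summxE. Qed.

Lemma qformC y M z : M^T = M -> qform y M z = qform z M y.
Proof.
move=> M_sym; rewrite /qform; have <- : (y^T *m M *m z)^T = z^T *m M *m y.
  by rewrite !trmx_mul trmxK M_sym mulmxA.
by rewrite [RHS]mxE.
Qed.

Lemma qform_mulmxl y M N z : qform (M *m y) N z = qform y (M^T *m N) z.
Proof. by rewrite /qform trmx_mul !mulmxA. Qed.

Lemma qformZ t y M : qform (t *: y) M (t *: y) = t ^+ 2 * qform y M y.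
Proof. by rewrite qformZl qformZr mulrA expr2. Qed.

Lemma qform_shift S y z t : S^T = S ->
  qform (y + t *: z) S (y + t *: z) =
  qform y S y + 2 * t * qform y S z + t ^+ 2 * qform z S z.
Proof.
move=> S_sym; rewrite qformDl !qformDr !qformZl !qformZr (qformC z _ S_sym).
ring.
Qed.

Lemma qform_cauchy_schwarz S y z : S^T = S -> (forall w, 0 <= qform w S w) ->
  qform y S z ^+ 2 <= qform y S y * qform z S z.
Proof.
move=> S_sym S_psd; apply: quad_ge0_sqr_le => // t.
by rewrite -qform_shift.
Qed.

Lemma psd_mulmx_eq0 S z : S^T = S -> (forall w, 0 <= qform w S w) ->
  qform z S z = 0 -> S *m z = 0.
Proof.
move=> S_sym S_psd Sz0; apply/colP => j; rewrite [RHS]mxE.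
have := qform_cauchy_schwarz (delta_mx j 0) z S_sym S_psd.
have -> : qform (delta_mx j 0) S z = (S *m z) j 0.
  by rewrite /qform trmx_delta -mulmxA -rowE mxE.
by rewrite Sz0 mulr0 => ?; apply/eqP; rewrite -sqrf_eq0 eq_le sqr_ge0 andbT.
Qed.

Lemma sum_qform_cauchy_schwarz k (S : 'I_k -> 'M[R]_p) (y z : 'I_k -> 'cV[R]_p) :
  (forall i, (S i)^T = S i) -> (forall i w, 0 <= qform w (S i) w) ->
  (\sum_(i < k) qform (y i) (S i) (z i)) ^+ 2 <=
  (\sum_(i < k) qform (y i) (S i) (y i)) * \sum_(i < k) qform (z i) (S i) (z i).
Proof.
move=> S_sym S_psd; apply: quad_ge0_sqr_le => [|t].
  by apply: sumr_ge0 => i _.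
rewrite !mulr_sumr -!big_split /=; apply: sumr_ge0 => i _.
by rewrite -qform_shift.
Qed.

End QuadraticForm.

Section PositiveDefinite.
Variables (R : realType) (p : nat).
Implicit Types (M : 'M[R]_p).

Lemma posdef_qform_ge0 M z : posdef M -> 0 <= qform z M z.
Proof.
case=> _ M_pos; have [->|z_neq0] := eqVneq z 0; last exact/ltW/M_pos.
by rewrite qform0r.
Qed.

Lemma posdef_unitmx M : posdef M -> M \in unitmx.
Proof.
case=> _ M_pos; rewrite unitmxE unitfE; apply/negP => /det0P [v v_neq0 vM0].
have := M_pos v^T; rewrite trmx_eq0 v_neq0 /qform trmxK vM0 mul0mx mxE ltxx.
by move/(_ isT).
Qed.

Lemma posdef_invmx M : posdef M -> posdef (invmx M).
Proof.
move=> M_pd; have M_unit := posdef_unitmx M_pd; case: M_pd => M_sym M_pos.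
split=> [|z z_neq0]; first by rewrite trmx_inv M_sym.
change (0 < qform z (invmx M) z).
have -> : qform z (invmx M) z = qform (invmx M *m z) M (invmx M *m z).
  by rewrite qform_mulmxl trmx_inv M_sym mulVmx // /qform mulmx1 mulmxA.
apply: M_pos; apply: contraNneq z_neq0 => Mz0.
by rewrite -(mulKVmx M_unit z) Mz0 mulmx0.
Qed.

Lemma sum_posdef_qform_gt0 k (S : 'I_k -> 'M[R]_p) (y : 'I_k -> 'cV[R]_p) :
  (forall i, posdef (S i)) -> (exists i, y i != 0) ->
  0 < \sum_(i < k) qform (y i) (S i) (y i).
Proof.
move=> S_pd [i0 yi0]; rewrite (bigD1 i0) //= ltr_pwDl //.
  exact: (S_pd i0).2.
by apply: sumr_ge0 => i _; exact: posdef_qform_ge0.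
Qed.

Lemma posdef_sum k (S : 'I_k -> 'M[R]_p) : (0 < k)%N ->
  (forall i, posdef (S i)) -> posdef (\sum_(i < k) S i).
Proof.
move=> k_gt0 S_pd; split=> [|z z_neq0].
  by rewrite linear_sum; apply: eq_bigr => i _; case: (S_pd i).
have := sum_posdef_qform_gt0 (y := fun=> z) S_pd (ex_intro _ (Ordinal k_gt0) z_neq0).
by rewrite -qform_summ.
Qed.

End PositiveDefinite.

Section Rayleigh.
Import numFieldNormedType.Exports.
Local Open Scope classical_set_scope.
Variables (R : realType) (n : nat).

Lemma continuous_qform_trmx (G : 'M[R]_n) :
  continuous (fun r : 'rV[R]_n => qform r^T G r^T).
Proof.
have qformE (r : 'rV[R]_n) :
    qform r^T G r^T = \sum_(j < n) (\sum_(i < n) r 0 i * G i j) * r 0 j.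
  by rewrite /qform trmxK !mxE; apply: eq_bigr => j _; rewrite !mxE.
rewrite (funext qformE).
apply: (continuous_big (op := +%R)) => [|j _]; first exact: add_continuous.
move=> r; apply: continuousM; last exact: coord_continuous.
move: r; apply: (continuous_big (op := +%R)) => [|i _]; first exact: add_continuous.
by move=> r; apply: continuousM; [exact: coord_continuous | exact: cst_continuous].
Qed.

Lemma compact_unit_sphere : compact [set r : 'rV[R]_n | `|r| = 1].
Proof.
have bounded : bounded_set [set r : 'rV[R]_n | `|r| = 1].
  by exists 1; split=> // M M_gt1 r /= ->; exact: ltW.
have closed_sphere : closed [set r : 'rV[R]_n | `|r| = 1].
  apply: (@preimage_closed _ _ (@Num.norm _ 'rV[R]_n) [set x : R | x = 1]).
    by move=> r _; exact: norm_continuous.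
  exact: closed_eq.
exact: bounded_closed_compact.
Qed.

Lemma qform_ratio_max (G H : 'M[R]_n) : (0 < n)%N ->
  (forall w, w != 0 -> 0 < qform w H w) ->
  exists2 w0 : 'cV[R]_n, w0 != 0 &
    forall w, qform w G w * qform w0 H w0 <= qform w0 G w0 * qform w H w.
Proof.
move=> n_gt0 H_pos; pose S := [set r : 'rV[R]_n | `|r| = 1].
pose f r := qform r^T G r^T / qform r^T H r^T.
have S_neq0 r : S r -> r^T != 0.
  rewrite /S /= trmx_eq0 => r1; apply: contra_eqN r1 => /eqP ->.
  by rewrite normr0 eq_sym oner_eq0.
have normalized r : r != 0 -> S (`|r|^-1 *: r).
  by move=> r_neq0; apply: normrZV; rewrite unitfE normr_eq0.
have [r0 /set_mem r0S r0_max] : exists2 r0, r0 \in S & forall r, r \in S -> f r <= f r0.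
  apply: compact_EVT_max; [|exact: compact_unit_sphere|].
    pose e : 'rV[R]_n := delta_mx 0 (Ordinal n_gt0).
    exists (`|e|^-1 *: e); apply: normalized.
    apply/eqP => /matrixP/(_ 0 (Ordinal n_gt0)).
    by rewrite !mxE !eqxx => /eqP; rewrite oner_eq0.
  apply: continuous_in_subspaceT => r /set_mem rS.
  apply: (@continuousM _ _ (fun r => qform r^T G r^T) (fun r => (qform r^T H r^T)^-1)).
    exact: continuous_qform_trmx.
  apply: continuousV; last exact: continuous_qform_trmx.
  by rewrite gt_eqF // H_pos // S_neq0.
exists r0^T; first exact: S_neq0.
move=> w; have [->|w_neq0] := eqVneq w 0.
  by rewrite !qform0r mul0r mulr0.
have Hw_gt0 := H_pos _ w_neq0; have Hr0_gt0 := H_pos _ (S_neq0 _ r0S).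
have wS : S (`|w^T|^-1 *: w^T) by apply: normalized; rewrite trmx_eq0.
have := r0_max _ (mem_set wS); rewrite /f linearZ /= trmxK !qformZ.
rewrite -mulf_div divff ?mul1r; last first.
  by rewrite expf_neq0 // invr_eq0 normr_eq0 trmx_eq0.
by rewrite ler_pdivrMr // mulrAC ler_pdivlMr.
Qed.

Lemma chmax_mulmx_posdef (M Q : 'M[R]_n) : (0 < n)%N -> M^T = M -> posdef Q ->
  exists l, is_chmax (M *m Q) l /\
    forall w, qform (Q *m w) M (Q *m w) <= l * qform w Q w.
Proof.
move=> n_gt0 M_sym [Q_sym Q_pos]; have Q_unit : Q \in unitmx by exact: posdef_unitmx.
pose G := Q *m M *m Q.
have G_sym : G^T = G by rewrite /G !trmx_mul Q_sym M_sym mulmxA.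
have qformG w : qform (Q *m w) M (Q *m w) = qform w G w.
  by rewrite qform_mulmxl Q_sym /qform !mulmxA.
have [w0 w0_neq0 w0_max] := qform_ratio_max G n_gt0 Q_pos.
have Qw0_gt0 := Q_pos _ w0_neq0.
pose l := qform w0 G w0 / qform w0 Q w0.
have bound w : qform (Q *m w) M (Q *m w) <= l * qform w Q w.
  by rewrite qformG /l mulrAC ler_pdivlMr //; exact: w0_max.
exists l; split=> //; split.
- have S_psd w : 0 <= qform w (l *: Q - G) w.
    by rewrite qformBm qformZm subr_ge0 -qformG.
  have S_sym : (l *: Q - G)^T = l *: Q - G.
    by rewrite linearB /= linearZ /= Q_sym G_sym.
  have /psd_mulmx_eq0 : qform w0 (l *: Q - G) w0 = 0.
    by rewrite qformBm qformZm /l divfK ?subrr // gt_eqF.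
  move=> /(_ S_sym S_psd) /eqP; rewrite mulmxBl subr_eq0 -scalemxAl => /eqP Gw0.
  apply/eigenvalueP; exists (Q *m w0)^T.
    have : (G *m w0)^T = (l *: (Q *m w0))^T by rewrite Gw0.
    by rewrite trmx_mul G_sym linearZ /= => <-; rewrite trmx_mul Q_sym /G !mulmxA.
  rewrite trmx_eq0; apply: contraNneq w0_neq0 => /(canRL (mulKmx Q_unit)) ->.
  by rewrite mulmx0.
- move=> m /eigenvalueP [v vMQ v_neq0]; pose w := invmx Q *m v^T.
  have Qw : Q *m w = v^T by rewrite /w mulKVmx.
  clearbody w.
  have w_neq0 : w != 0.
    by apply: contraNneq v_neq0 => w0'; rewrite -trmx_eq0 -Qw w0' mulmx0.
  have := bound w; rewrite Qw.
  have -> : qform v^T M v^T = m * qform w Q w.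
    have vE : v = w^T *m Q by rewrite -Q_sym -trmx_mul Qw trmxK.
    by rewrite /qform trmxK -Qw !mulmxA -(mulmxA v) vMQ -scalemxAl [LHS]mxE vE.
  by rewrite ler_pM2r // Q_pos.
Qed.

End Rayleigh.

Definition Cmat {R : realType} {p k : nat} (V : 'I_k -> 'M[R]_p) (d : 'I_k -> R) :=
  \sum_(i < k) d i ^+ 2 *: V i - (\sum_(i < k) d i) ^+ 2 *: Amat V.

Definition Cfactor {R : realType} {p k : nat} (V : 'I_k -> 'M[R]_p) (d : 'I_k -> R)
  (u : 'cV[R]_p) (i : 'I_k) : 'cV[R]_p :=
  d i *: (V i *m u) - (\sum_(j < k) d j) *: (Amat V *m u).

Section WeightedResiduals.
Variables (R : realType) (p k : nat) (V : 'I_k -> 'M[R]_p).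
Hypotheses (V_pd : forall i, posdef (V i)) (k_gt0 : (0 < k)%N).

Let invV_pd i : posdef (invmx (V i)).
Proof. exact: posdef_invmx. Qed.

Let sum_invV_pd : posdef (\sum_(i < k) invmx (V i)).
Proof. exact: posdef_sum. Qed.

Let sum_invV_unit : (\sum_(i < k) invmx (V i)) \in unitmx.
Proof. exact: posdef_unitmx. Qed.

Let qform_V_invV i u z : qform (V i *m u) (invmx (V i)) z = (u^T *m z) 0 0.
Proof. by rewrite qform_mulmxl (V_pd i).1 mulmxV ?posdef_unitmx // /qform mulmx1. Qed.

Lemma Amat_sym : (Amat V)^T = Amat V.
Proof. by rewrite /Amat trmx_inv sum_invV_pd.1. Qed.

Lemma sum_invmx_resid_eq0 (x : 'I_k -> 'cV[R]_p) :
  \sum_(i < k) invmx (V i) *m (x i - nuhat V x) = 0.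
Proof.
under eq_bigr do rewrite mulmxBr.
by rewrite sumrB -mulmx_suml /nuhat /Amat mulKVmx // subrr.
Qed.

Lemma Cmat_sym d : (Cmat V d)^T = Cmat V d.
Proof.
rewrite /Cmat raddfB /= linear_sum /= linearZ /= Amat_sym; congr (_ - _).
by apply: eq_bigr => i _; rewrite linearZ /= (V_pd i).1.
Qed.

Lemma sum_qform_Cfactor d u :
  \sum_(i < k) qform (Cfactor V d u i) (invmx (V i)) (Cfactor V d u i) =
  qform u (Cmat V d) u.
Proof.
set s := \sum_(i < k) d i; set a := Amat V *m u.
set t := qform u (Amat V) u.
have ua : (u^T *m a) 0 0 = t by rewrite /t /qform mulmxA.
have aSa : qform a (\sum_(i < k) invmx (V i)) a = t.
  by rewrite {1}/a qform_mulmxl Amat_sym {1}/Amat mulVmx // /qform mulmx1.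
have term i : qform (Cfactor V d u i) (invmx (V i)) (Cfactor V d u i) =
    d i ^+ 2 * qform u (V i) u - 2 * d i * s * t + s ^+ 2 * qform a (invmx (V i)) a.
  rewrite /Cfactor -/s -/a qformBl !qformBr !qformZl !qformZr.
  rewrite (qformC a _ (invV_pd i).1) !qform_V_invV ua mulmxA -/(qform u (V i) u).
  ring.
rewrite (eq_bigr _ (fun i _ => term i)) big_split sumrB /= -mulr_sumr -qform_summ aSa.
rewrite /Cmat qformBm qformZm qform_summ -/s -/t.
under [in RHS]eq_bigr do rewrite qformZm.
rewrite -!mulr_suml -mulr_sumr -/s; ring.
Qed.

Lemma sum_qform_Cfactor_resid d u (y : 'I_k -> 'cV[R]_p) :
  \sum_(i < k) invmx (V i) *m y i = 0 ->
  \sum_(i < k) qform (Cfactor V d u i) (invmx (V i)) (y i) =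
  (u^T *m \sum_(i < k) d i *: y i) 0 0.
Proof.
move=> invV_y0; have a_y0 : \sum_(i < k) qform (Amat V *m u) (invmx (V i)) (y i) = 0.
  rewrite /qform -summxE; under eq_bigr do rewrite -mulmxA.
  by rewrite -mulmx_sumr invV_y0 mulmx0 mxE.
under eq_bigr do rewrite /Cfactor qformBl !qformZl qform_V_invV.
rewrite sumrB -mulr_sumr a_y0 mulr0 subr0 mulmx_sumr summxE.
by apply: eq_bigr => i _; rewrite -scalemxAr [RHS]mxE.
Qed.

Lemma Cmat_psd d u : 0 <= qform u (Cmat V d) u.
Proof.
by rewrite -sum_qform_Cfactor; apply: sumr_ge0 => i _; exact: posdef_qform_ge0.
Qed.

Variables (Q : 'M[R]_p) (d : 'I_k -> R) (x : 'I_k -> 'cV[R]_p).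
Hypothesis Q_pd : posdef Q.

Lemma Bratio_num_sqr_le (w := \sum_(i < k) d i *: (x i - nuhat V x)) :
  qform w Q w ^+ 2 <= qform (Q *m w) (Cmat V d) (Q *m w) *
    \sum_(j < k) qform (x j - nuhat V x) (invmx (V j)) (x j - nuhat V x).
Proof.
have -> : qform w Q w = \sum_(i < k)
    qform (Cfactor V d (Q *m w) i) (invmx (V i)) (x i - nuhat V x).
  by rewrite sum_qform_Cfactor_resid ?sum_invmx_resid_eq0 // trmx_mul Q_pd.1.
rewrite -sum_qform_Cfactor; apply: sum_qform_cauchy_schwarz => i.
  exact: (invV_pd i).1.
by move=> z; exact: posdef_qform_ge0.
Qed.

Lemma Bratio_le l :
  (forall w, qform (Q *m w) (Cmat V d) (Q *m w) <= l * qform w Q w) ->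
  (exists i j, x i != x j) -> Bratio V Q d x <= l.
Proof.
move=> bound [i0 [j0 xij]]; rewrite /Bratio /=.
have [i1 resid_neq0] : exists i, x i - nuhat V x != 0.
  have [xi0|] := eqVneq (x i0 - nuhat V x) 0; last by exists i0.
  exists j0; apply: contraNneq xij => xj0.
  by rewrite (subr0_eq xi0) (subr0_eq xj0).
have l_ge0 : 0 <= l.
  have := bound (x i1 - nuhat V x); have := Cmat_psd d (Q *m (x i1 - nuhat V x)).
  have := Q_pd.2 _ resid_neq0; rewrite /qform; nra.
set w := \sum_(i < k) d i *: (x i - nuhat V x).
set N := qform w Q w; set D := \sum_(j < k) _.
have D_gt0 : 0 < D by apply: sum_posdef_qform_gt0 => //; exists i1.
rewrite ler_pdivrMr //; have [->|N_neq0] := eqVneq N 0.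
  exact: mulr_ge0 (ltW D_gt0).
have N_gt0 : 0 < N by rewrite lt_def N_neq0 posdef_qform_ge0.
have : N ^+ 2 <= l * N * D.
  by apply: le_trans Bratio_num_sqr_le _; rewrite ler_pM2r //; exact: bound.
nra.
Qed.

End WeightedResiduals.

Theorem lemma3 (R : realType) (p k : nat) (V : 'I_k -> 'M[R]_p) (Q : 'M[R]_p)
  (d : 'I_k -> R) (x : 'I_k -> 'cV[R]_p) :
  (2 <= k)%N ->
  (forall i, posdef (V i)) -> posdef Q ->
  (exists i j, x i != x j) ->
  exists l : R,
    is_chmax ((\sum_(i < k) (d i) ^+ 2 *: V i
               - (\sum_(i < k) d i) ^+ 2 *: Amat V) *m Q) l /\
    Bratio V Q d x <= l.
Proof.
move=> k_ge2 V_pd Q_pd x_neq; have k_gt0 : (0 < k)%N by exact: ltnW.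
have p_gt0 : (0 < p)%N.
  rewrite lt0n; apply/eqP => p0; case: x_neq => i [j]; apply/negP; rewrite negbK.
  suff : forall a b : 'cV[R]_p, a == b by [].
  by rewrite p0 => a b; rewrite [a]flatmx0 [b]flatmx0.
have [l [l_chmax l_bound]] := chmax_mulmx_posdef p_gt0 (Cmat_sym V_pd k_gt0 d) Q_pd.
by exists l; split; last exact: Bratio_le.
Qed.
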